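(* Let $\mathcal{H}$ be a separable Hilbert space and $H$ a positive Hermitian operator on $\mathcal{H}$ with purely discrete spectrum, such that there is no infinite-dimensional subspace on which $H$ is bounded. For $E>0$ let $\mathcal{P}(E)$ be the set of density operators $\rho$ on $\mathcal{H}$ with $\mathrm{Tr}\,\rho H\le E$. Then $\mathcal{P}(E)$ is complete with respect to the Hilbert–Schmidt norm, i.e. every Cauchy sequence in $\mathcal{P}(E)$ converges in $\|\cdot\|_2$ to an element of $\mathcal{P}(E)$.
   Context: A density operator is a Hermitian, positive semidefinite, trace-class operator of trace 1. $\|A\|_2=\sqrt{\mathrm{Tr}\,A^\dagger A}$ is the Hilbert–Schmidt norm. For positive $\rho$, $\mathrm{Tr}\,\rho H=\sum_n\langle n|\rho|n\rangle E_n$ in an eigenbasis of $H$. *)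

From HB Require Import structures.
From mathcomp Require Import all_boot all_order all_algebra.
From mathcomp Require Import all_classical all_reals.
From mathcomp Require Import ereal esum.
From mathcomp Require Import complex.
Set Implicit Arguments. Unset Strict Implicit. Unset Printing Implicit Defensive.
Import Order.TTheory GRing.Theory Num.Theory.
Local Open Scope ring_scope.
Local Open Scope classical_set_scope.
Local Open Scope complex_scope.

(* The separable Hilbert space is l^2(I) for a countable index type I,
   identified with H's orthonormal eigenbasis (|n>)_{n in I}; the operator H
   is diag(En).  Operators are represented by their matrices
   A : I -> I -> R[i],  A i j = <i|A|j>. *)

Definition opmat (R : realType) (I : countType) := I -> I -> R[i].

Definition hermitian (R : realType) (I : countType) (A : opmat R I) : Prop :=
  forall i j, A j i = (A i j)^*.

Definition psd (R : realType) (I : countType) (A : opmat R I) : Prop :=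
  forall (s : seq I) (x : I -> R[i]), uniq s ->
    0 <= \sum_(i <- s) \sum_(j <- s) (x i)^* * A i j * x j.

Definition ptrace (R : realType) (I : countType) (A : opmat R I) : \bar R :=
  \esum_(i in [set: I]) (complex.Re (A i i))%:E.

(* density operator: Hermitian, PSD, trace 1 (trace class follows) *)
Definition density (R : realType) (I : countType) (rho : opmat R I) : Prop :=
  hermitian rho /\ psd rho /\ ptrace rho = 1%E.

(* Tr (rho H) = sum_n <n|rho|n> E_n, for positive rho *)
Definition energy (R : realType) (I : countType) (En : I -> R) (rho : opmat R I)
  : \bar R := \esum_(i in [set: I]) (complex.Re (rho i i) * En i)%:E.

Definition PE (R : realType) (I : countType) (En : I -> R) (E : R)
  : set (opmat R I) := [set rho | density rho /\ (energy En rho <= E%:E)%E].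

Definition hs2 (R : realType) (I : countType) (A : opmat R I) : \bar R :=
  \esum_(p in [set: I * I])
    ((complex.Re (A p.1 p.2)) ^+ 2 + (complex.Im (A p.1 p.2)) ^+ 2)%:E.

Definition opsub (R : realType) (I : countType) (A B : opmat R I) : opmat R I :=
  fun i j => A i j - B i j.

(* A Hilbert-Schmidt Cauchy sequence is entrywise Cauchy, so it has an
   entrywise limit sigma, and Fatou's lemma for sums gives ||rho_n - sigma||_2
   -> 0.  Hermiticity and positivity pass to entrywise limits, and Fatou again
   gives Tr sigma <= 1 and Tr sigma H <= E.  No trace escapes to infinity: by
   Markov's inequality every rho_n carries weight at least 1 - E/M on the
   finite set {n | E_n <= M}, hence so does sigma, and Tr sigma = 1. *)

From Pilot Require Import Defs.
From mathcomp Require Import all_boot all_order all_algebra.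
From mathcomp Require Import all_classical all_reals.
From mathcomp Require Import ereal esum complex topology normedtype sequences.
From mathcomp Require Import lra.
Set Implicit Arguments. Unset Strict Implicit. Unset Printing Implicit Defensive.
Import Order.TTheory GRing.Theory Num.Theory.
Import numFieldNormedType.Exports.
Local Open Scope ring_scope.
Local Open Scope classical_set_scope.

(* Num.Theory exports its own [Re] and [Im]. *)
Local Notation Re := (@complex.Re _).
Local Notation Im := (@complex.Im _).

Section RealSums.
Context {R : realType}.

Lemma cvg_sum (J : Type) (r : seq J) (u : J -> nat -> R) (a : J -> R) :
  (forall j, u j @ \oo --> a j) ->
  (fun n => \sum_(j <- r) u j n) @ \oo --> \sum_(j <- r) a j.
Proof. by move=> ua; apply: cvg_big => //; exact: add_continuous. Qed.

Lemma cauchy_seq_cvg (u : nat -> R) :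
  (forall e : R, 0 < e -> exists N, forall m n, (N <= m)%N -> (N <= n)%N ->
     `|u m - u n| < e) ->
  cvg (u @ \oo).
Proof.
move=> uc; apply/cauchy_cvgP; apply: cauchy_exP => e e0.
have [N uN] := uc e e0; exists (u N), N => // n /= Nn.
by rewrite /ball /= uN.
Qed.

Lemma ler_sum_subset (T : eqType) (r1 r2 : seq T) (f : T -> R) :
  uniq r1 -> uniq r2 -> {subset r1 <= r2} ->
  (forall t, t \in r2 -> 0 <= f t) ->
  \sum_(t <- r1) f t <= \sum_(t <- r2) f t.
Proof.
move=> u1 u2 sub12 f0; rewrite [leRHS](bigID (mem r1)) /=.
have -> : \sum_(t <- r2 | t \in r1) f t = \sum_(t <- r1) f t.
  rewrite -big_filter; apply/perm_big/uniq_perm; rewrite ?filter_uniq // => t.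
  by rewrite mem_filter; case: (boolP (t \in r1)) => // /sub12 ->.
by rewrite lerDl big_seq_cond sumr_ge0 // => t /andP[/f0].
Qed.

End RealSums.

Section Esum.
Context {R : realType} {T : choiceType}.

Lemma esum_le_seq (f : T -> R) (c : \bar R) :
  (forall s : seq T, uniq s -> ((\sum_(t <- s) f t)%:E <= c)%E) ->
  (\esum_(t in [set: T]) (f t)%:E <= c)%E.
Proof.
move=> fc; apply: ge_ereal_sup => _ [X [finX _] <-].
by rewrite fsbig_finite //= sumEFin; apply: fc; exact: finmap.fset_uniq.
Qed.

Lemma sum_le_esum (f : T -> R) (s : seq T) :
  uniq s -> ((\sum_(t <- s) f t)%:E <= \esum_(t in [set: T]) (f t)%:E)%E.
Proof.
move=> us; apply: esum_ge; exists [set` s]; first by split; [exact: finite_seq|].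
by rewrite -fsbig_seq // sumEFin.
Qed.

Lemma esum_le_cvg (f : nat -> T -> R) (g : T -> R) (c : R) :
  (forall t, f ^~ t @ \oo --> g t) ->
  (\forall n \near \oo, \esum_(t in [set: T]) (f n t)%:E <= c%:E)%E ->
  (\esum_(t in [set: T]) (g t)%:E <= c%:E)%E.
Proof.
move=> fg fc; apply: esum_le_seq => s us; rewrite lee_fin.
apply: (cvgr_to_le (cvg_sum fg)); apply: filterS fc => n fnc.
by rewrite -lee_fin; exact: le_trans (sum_le_esum (f n) us) fnc.
Qed.

Lemma esum_le_markov (p w : T -> R) (s : seq T) (M C : R) :
  (forall t, 0 <= p t) -> (forall t, 0 <= w t) -> 0 < M ->
  uniq s -> (forall t, w t <= M -> t \in s) ->
  (\esum_(t in [set: T]) (p t * w t)%:E <= C%:E)%E ->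
  (\esum_(t in [set: T]) (p t)%:E <= (\sum_(t <- s) p t + C / M)%:E)%E.
Proof.
move=> p0 w0 M0 us sM pwC; apply: esum_le_seq => X uX; rewrite lee_fin.
rewrite (bigID (fun t => w t <= M)) /=; apply: lerD.
  rewrite -big_filter; apply: ler_sum_subset => [|//||t _]; last exact: p0.
    exact: filter_uniq.
  by move=> t; rewrite mem_filter => /andP[/sM].
have pw0 t : 0 <= p t * w t by rewrite mulr_ge0.
apply: (@le_trans _ _ (\sum_(t <- X | ~~ (w t <= M)) p t * w t / M)).
  apply: ler_sum => t; rewrite -ltNge => Mw.
  by rewrite ler_pdivlMr // ler_wpM2l // ltW.
rewrite -mulr_suml ler_pM2r ?invr_gt0 //.
apply: (@le_trans _ _ (\sum_(t <- X) p t * w t)).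
  by rewrite [leRHS](bigID (fun t => w t <= M)) lerDr sumr_ge0.
by rewrite -lee_fin; exact: le_trans (sum_le_esum (fun t => p t * w t) uX) pwC.
Qed.

End Esum.

Section ComplexLimits.
Context {R : realType}.
Local Open Scope complex_scope.

Definition sqnormc (z : R[i]) : R := Re z ^+ 2 + Im z ^+ 2.

Definition cvgC (u : nat -> R[i]) (z : R[i]) : Prop :=
  Re \o u @ \oo --> Re z /\ Im \o u @ \oo --> Im z.

Definition limC (u : nat -> R[i]) : R[i] :=
  Complex (lim (Re \o u @ \oo)) (lim (Im \o u @ \oo)).

Lemma sqnormc_lt (z : R[i]) (e : R) :
  0 < e -> sqnormc z < e ^+ 2 -> `|Re z| < e /\ `|Im z| < e.
Proof. by rewrite /sqnormc => e0 ze; rewrite !ltr_norml; split; nra. Qed.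

Lemma cauchyC_cvgC (u : nat -> R[i]) :
  (forall e : R, 0 < e -> exists N, forall m n, (N <= m)%N -> (N <= n)%N ->
     sqnormc (u m - u n) < e) ->
  cvgC u (limC u).
Proof.
move=> uc; have uc2 e : 0 < e -> exists N, forall m n, (N <= m)%N ->
    (N <= n)%N -> `|Re (u m - u n)| < e /\ `|Im (u m - u n)| < e.
  move=> e0; have [N uN] := uc _ (exprn_gt0 2 e0).
  by exists N => m n Nm Nn; apply: sqnormc_lt => //; exact: uN.
split; apply: cauchy_seq_cvg => e /uc2 [N uN]; exists N => m n Nm Nn.
  by have [+ _] := uN m n Nm Nn; rewrite raddfB.
by have [_ +] := uN m n Nm Nn; rewrite raddfB.
Qed.

Lemma cvgC_unique (u : nat -> R[i]) (z z' : R[i]) :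
  cvgC u z -> cvgC u z' -> z = z'.
Proof.
case: z z' => [a b] [a' b'] [/= ua ub] [/= ua' ub'].
by congr (_ +i* _); [exact: (cvg_unique _ ua ua') | exact: (cvg_unique _ ub ub')].
Qed.

Lemma cvgC_conj (u : nat -> R[i]) (z : R[i]) :
  cvgC u z -> cvgC (conjc \o u) z^*.
Proof.
case: z => a b [ua ub]; split.
  by have -> : Re \o (conjc \o u) = Re \o u by apply/funext => n /=; case: (u n).
have -> : Im \o (conjc \o u) = (fun n => - (Im \o u) n).
  by apply/funext => n /=; case: (u n).
exact: cvgN.
Qed.

Lemma cvgC_sum (J : Type) (r : seq J) (u : J -> nat -> R[i]) (z : J -> R[i]) :
  (forall j, cvgC (u j) (z j)) ->
  cvgC (fun n => \sum_(j <- r) u j n) (\sum_(j <- r) z j).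
Proof.
move=> uz; split; rewrite raddf_sum.
  have -> : Re \o (fun n => \sum_(j <- r) u j n) = fun n => \sum_(j <- r) Re (u j n).
    by apply/funext => n /=; rewrite raddf_sum.
  by apply: cvg_sum => j; have [] := uz j.
have -> : Im \o (fun n => \sum_(j <- r) u j n) = fun n => \sum_(j <- r) Im (u j n).
  by apply/funext => n /=; rewrite raddf_sum.
by apply: cvg_sum => j; have [] := uz j.
Qed.

Lemma cvgC_mul (u : nat -> R[i]) (z a b : R[i]) :
  cvgC u z -> cvgC (fun n => a * u n * b) (a * z * b).
Proof.
have ab_mul x : a * x * b = (Re (a * b) * Re x - Im (a * b) * Im x)
                         +i* (Re (a * b) * Im x + Im (a * b) * Re x).
  by rewrite mulrAC; case: (a * b) => c d; case: x => x1 x2; simpc.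
rewrite ab_mul => -[uRe uIm]; split.
  have -> : Re \o (fun n => a * u n * b) =
            fun n => Re (a * b) * Re (u n) - Im (a * b) * Im (u n).
    by apply/funext => n /=; rewrite ab_mul.
  by apply: cvgB; exact: cvgMl_tmp.
have -> : Im \o (fun n => a * u n * b) =
          fun n => Re (a * b) * Im (u n) + Im (a * b) * Re (u n).
  by apply/funext => n /=; rewrite ab_mul.
by apply: cvgD; exact: cvgMl_tmp.
Qed.

Lemma cvgC_ge0 (u : nat -> R[i]) (z : R[i]) :
  (forall n, 0 <= u n) -> cvgC u z -> 0 <= z.
Proof.
move=> u0 [uRe uIm]; have {}u0 n : Im (u n) = 0 /\ 0 <= Re (u n).
  by have := u0 n; rewrite lecE => /andP[/eqP].
rewrite lecE; apply/andP; split.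
  have Im0 : Im \o u = cst 0 by apply/funext => n /=; have [] := u0 n.
  by rewrite Im0 in uIm; rewrite (cvg_unique _ uIm (cvg_cst 0)).
by apply: (cvgr_to_ge uRe); apply: nearW => n /=; have [] := u0 n.
Qed.

Lemma cvg_sqnormc_sub (u : nat -> R[i]) (z a : R[i]) :
  cvgC u z -> (fun n => sqnormc (a - u n)) @ \oo --> sqnormc (a - z).
Proof.
move=> [uRe uIm]; rewrite /sqnormc; under eq_fun do rewrite !raddfB !expr2.
rewrite !raddfB !expr2.
by apply: cvgD; apply: cvgM; apply: cvgB => //; exact: cvg_cst.
Qed.

End ComplexLimits.

Section DensityOperators.
Variables (R : realType) (I : countType).

Lemma sqnormc_le_hs2 (A : opmat R I) i j : ((sqnormc (A i j))%:E <= hs2 A)%E.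
Proof.
have := sum_le_esum (fun p => sqnormc (A p.1 p.2)) (isT : uniq [:: (i, j)]).
by rewrite big_seq1.
Qed.

Lemma psd_diag_ge0 (A : opmat R I) i : psd A -> 0 <= Re (A i i).
Proof.
move=> /(_ [:: i] (fun=> 1) isT); rewrite !big_seq1 mulr1.
by case: (A i i) => a b; simpc => /andP[].
Qed.

Variables (A : nat -> opmat R I) (B : opmat R I).
Hypothesis AB : forall i j, cvgC (fun n => A n i j) (B i j).

Lemma hermitian_cvg : (forall n, Defs.hermitian (A n)) -> Defs.hermitian B.
Proof.
move=> hA i j; apply: (cvgC_unique (AB j i)).
have -> : (fun n => A n j i) = conjc \o (fun n => A n i j).
  by apply/funext => n /=; rewrite hA.
exact: cvgC_conj.
Qed.

Lemma psd_cvg : (forall n, psd (A n)) -> psd B.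
Proof.
move=> psdA s x us; apply: (cvgC_ge0 (fun n => psdA n s x us)).
by apply: cvgC_sum => i; apply: cvgC_sum => j; exact: cvgC_mul.
Qed.

Lemma diag_esum_le_cvg (f : I -> R) (c : R) :
  (forall n, \esum_(i in [set: I]) (Re (A n i i) * f i)%:E <= c%:E)%E ->
  (\esum_(i in [set: I]) (Re (B i i) * f i)%:E <= c%:E)%E.
Proof.
move=> Ac; apply: (esum_le_cvg (f := fun n i => Re (A n i i) * f i)).
  by move=> i; apply: cvgMr_tmp; have [] := AB i i.
exact: nearW.
Qed.

Lemma hs2_sub_le_cvg (C : opmat R I) (c : R) :
  (\forall n \near \oo, hs2 (opsub C (A n)) <= c%:E)%E ->
  (hs2 (opsub C B) <= c%:E)%E.
Proof.
apply: (esum_le_cvg (f := fun n p => sqnormc (C p.1 p.2 - A n p.1 p.2))).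
by move=> p; exact: cvg_sqnormc_sub.
Qed.

End DensityOperators.

Section EnergyShell.
Variables (R : realType) (I : countType) (En : I -> R) (E : R).
Hypothesis En_ge0 : forall n, 0 <= En n.

Lemma PE_mass_ge (rho : opmat R I) (M : R) (s : seq I) :
  PE En E rho -> 0 < M -> uniq s -> (forall i, En i <= M -> i \in s) ->
  1 <= \sum_(i <- s) Re (rho i i) + E / M.
Proof.
move=> [[_ [psd_rho tr1]] en] M0 us sM.
have := esum_le_markov (fun i => psd_diag_ge0 i psd_rho) En_ge0 M0 us sM en.
by rewrite -/(ptrace rho) tr1 lee_fin.
Qed.

Variables (rho : nat -> opmat R I) (sigma : opmat R I).
Hypothesis rhoP : forall n, PE En E (rho n).
Hypothesis rho_sigma : forall i j, cvgC (fun n => rho n i j) (sigma i j).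

Lemma ptrace_cvg_ge1 :
  (forall M : R, finite_set [set n | En n <= M]) -> 0 < E ->
  (1 <= ptrace sigma)%E.
Proof.
move=> En_finite E0; apply/lee_addgt0Pr => e e0.
have M0 : 0 < E / e by rewrite divr_gt0.
have [s0 s0E] := (finite_seqP _).1 (En_finite (E / e)).
have us := undup_uniq s0.
have sM i : En i <= E / e -> i \in undup s0.
  by move=> iM; rewrite mem_undup; have : [set` s0] i by rewrite -s0E.
apply: le_trans (leeD2r e%:E (sum_le_esum _ us)).
rewrite -EFinD lee_fin.
have mass n : 1 <= \sum_(i <- undup s0) Re (rho n i i) + e.
  have := PE_mass_ge (rhoP n) M0 us sM.
  by rewrite invf_div mulrCA divff ?gt_eqF ?mulr1.
apply: (cvgr_to_ge (cvgD (cvg_sum (fun i => (rho_sigma i i).1)) (cvg_cst e))).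
exact: nearW.
Qed.

Lemma PE_cvg :
  (forall M : R, finite_set [set n | En n <= M]) -> 0 < E -> PE En E sigma.
Proof.
move=> En_finite E0.
have tr_le1 : (ptrace sigma <= 1%:E)%E.
  rewrite /ptrace; under eq_esum do rewrite -[Re _]mulr1.
  apply: (diag_esum_le_cvg rho_sigma) => n.
  by have [[_ [_ <-]] _] := rhoP n; under [leRHS]eq_esum do rewrite -[Re _]mulr1.
split; [split; [|split] | ].
- by apply: (hermitian_cvg rho_sigma) => n; have [[]] := rhoP n.
- by apply: (psd_cvg rho_sigma) => n; have [[_ []]] := rhoP n.
- by apply/eqP; rewrite eq_le tr_le1 ptrace_cvg_ge1.
- by apply: (diag_esum_le_cvg rho_sigma) => n; have [] := rhoP n.
Qed.

End EnergyShell.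

Theorem mainTheorem8 (R : realType) (I : countType) (En : I -> R)
  (En_ge0 : forall n, 0 <= En n)
  (Hunb : forall M : R, finite_set [set n | En n <= M])
  (E : R) (E_gt0 : 0 < E)
  (rho : nat -> opmat R I)
  (rhoP : forall k, PE En E (rho k))
  (cauchy : forall eps : R, 0 < eps ->
     exists N : nat, forall m n, (N <= m)%N -> (N <= n)%N ->
       (hs2 (opsub (rho m) (rho n)) < eps%:E)%E) :
  exists2 sigma : opmat R I, PE En E sigma &
    forall eps : R, 0 < eps ->
      exists N : nat, forall n, (N <= n)%N ->
        (hs2 (opsub (rho n) sigma) < eps%:E)%E.
Proof.
pose sigma : opmat R I := fun i j => limC (fun n => rho n i j).
have rho_sigma i j : cvgC (fun n => rho n i j) (sigma i j).
  apply: cauchyC_cvgC => e /cauchy [N rhoN]; exists N => m n Nm Nn.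
  by rewrite -lte_fin; exact: le_lt_trans (sqnormc_le_hs2 _ i j) (rhoN m n Nm Nn).
exists sigma; first exact: PE_cvg.
move=> eps e0; have [N rhoN] := cauchy (eps / 2) (divr_gt0 e0 (ltr0Sn _ 1)).
exists N => n Nn; apply: (@le_lt_trans _ _ (eps / 2)%:E); last first.
  by rewrite lte_fin; lra.
apply: (hs2_sub_le_cvg rho_sigma); exists N => // m /= Nm.
exact: ltW (rhoN n m Nn Nm).
Qed.
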